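(* Let $V$ be a finite ground set with $n=|V|$, let $f:2^V\to\mathbb{R}_{\ge 0}$ be monotone submodular, let $k\ge 1$ be an integer, and let $OPT=\max_{A\subseteq V,|A|\le k} f(A)$. Run the following randomized procedure (Algorithm 1) with threshold $\tau=\frac{OPT}{2k}$: (i) draw a random set $S\subseteq V$ containing each element independently with probability $p=4\sqrt{k/n}$, and independently partition $V$ at random into sets $V_1,\dots,V_m$ (one per machine); (ii) compute $G_0=\textsc{ThresholdGreedy}(S,\emptyset,\tau)$; (iii) for each $i=1,\dots,m$, set $R_i=\textsc{ThresholdFilter}(V_i,G_0,\tau)$ if $|G_0|<k$, and $R_i=\emptyset$ otherwise; (iv) output $G=\textsc{ThresholdGreedy}\big(\bigcup_{i=1}^m R_i,\,G_0,\,\tau\big)$. Then the approximation ratio of this algorithm is at least $1/2$; namely, for every outcome of the random choices, the output satisfies $f(G)\ge \frac12\, OPT$.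
   Context: A function $f:2^V\to\mathbb{R}_{\ge0}$ is submodular if $f(A\cup\{e\})-f(A)\ge f(B\cup\{e\})-f(B)$ for all $A\subseteq B\subseteq V$ and $e\notin B$, and monotone if $f(A\cup\{e\})-f(A)\ge 0$ for all $A$ and $e\notin A$. For $A\subseteq V$ and $e\in V$ write $f_A(e)=f(A\cup\{e\})-f(A)$ (the marginal of $e$ with respect to $A$). Fix a total order on $V$; all sets are scanned in this order. $\textsc{ThresholdGreedy}(T,G,\tau)$ (for $T\subseteq V$, $G\subseteq V$ with $|G|\le k$, $\tau>0$): start with $G'=G$; scan the elements $e\in T$ in the fixed order, and whenever $f_{G'}(e)\ge\tau$ and $|G'|<k$, replace $G'$ by $G'\cup\{e\}$; return $G'$. $\textsc{ThresholdFilter}(T,G,\tau)$ returns $\{e\in T: f_G(e)\ge\tau\}$. Here $m$ is the number of machines (the paper takes $m=\sqrt{n/k}$). *)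

From mathcomp Require Import all_boot all_order all_algebra.
Set Implicit Arguments. Unset Strict Implicit. Unset Printing Implicit Defensive.
Import Order.TTheory GRing.Theory Num.Theory.
Local Open Scope ring_scope.

Section Defs.
Variables (T : finType) (R : realFieldType).

Definition marg (f : {set T} -> R) (A : {set T}) (e : T) : R :=
  f (e |: A) - f A.

Definition nonneg_fun (f : {set T} -> R) : Prop := forall A : {set T}, 0 <= f A.

Definition monotone (f : {set T} -> R) : Prop :=
  forall (A : {set T}) (e : T), e \notin A -> 0 <= marg f A e.

Definition submodular (f : {set T} -> R) : Prop :=
  forall (A B : {set T}) (e : T), A \subset B -> e \notin B -> marg f B e <= marg f A e.

(* OPT = max_{|A| <= k} f(A)  (f is nonnegative, so 0 is a harmless seed) *)
Definition OPT (f : {set T} -> R) (k : nat) : R :=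
  \big[Num.max/0]_(A : {set T} | (#|A| <= k)%N) f A.

Definition thresholdGreedy (ord : seq T) (f : {set T} -> R) (k : nat)
  (Ts G : {set T}) (tau : R) : {set T} :=
  foldl (fun G' e =>
           if [&& e \in Ts, tau <= marg f G' e & (#|G'| < k)%N]
           then e |: G' else G') G ord.

Definition thresholdFilter (f : {set T} -> R) (Ts G : {set T}) (tau : R)
  : {set T} := [set e in Ts | tau <= marg f G e].

(* Algorithm 1 for a fixed outcome of the randomness: the sample S and the
   machine assignment [mach] (V_i = {e | mach e = i}). *)
Definition algorithm1 (ord : seq T) (f : {set T} -> R) (k m : nat)
  (S : {set T}) (mach : T -> 'I_m) : {set T} :=
  let tau := OPT f k / (2 * k%:R) in
  let G0 := thresholdGreedy ord f k S set0 tau in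
  let Rs := fun i : 'I_m =>
    if (#|G0| < k)%N then thresholdFilter f [set e | mach e == i] G0 tau
    else set0 in
  thresholdGreedy ord f k (\bigcup_(i < m) Rs i) G0 tau.
End Defs.

From mathcomp Require Import all_boot all_order all_algebra.
From mathcomp Require Import ring lra.
Set Implicit Arguments. Unset Strict Implicit. Unset Printing Implicit Defensive.
Import Order.TTheory GRing.Theory Num.Theory.
Local Open Scope ring_scope.

(** Every element accepted by ThresholdGreedy raises f by at least tau, so
    f(G) >= |G| tau, which is k tau = OPT/2 once G is full.  The machines'
    filters together form the filter of all of V, so neither the sample nor
    the partition matters.  If G is not full, no element has marginal >= tau
    w.r.t. G: the filtered elements were rejected by the last greedy pass,
    the others already failed the filter against G0 ⊆ G, and marginals only
    shrink as the set grows.  For an optimal O, submodularity then gives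
    OPT <= f(G) + |O| tau <= f(G) + OPT/2. *)

Section Submodular.
Variables (T : finType) (R : realFieldType) (f : {set T} -> R).
Hypotheses (f_mono : monotone f) (f_submod : submodular f).

Lemma marg_mem0 (A : {set T}) e : e \in A -> marg f A e = 0.
Proof. by move=> eA; rewrite /marg (setUidPr _) ?subrr // sub1set. Qed.

Lemma marg_ge0 (A : {set T}) e : 0 <= marg f A e.
Proof. by have [/marg_mem0 ->|/f_mono] := boolP (e \in A). Qed.

Lemma marg_le_subset (A B : {set T}) e :
  A \subset B -> marg f B e <= marg f A e.
Proof.
move=> AB; have [eB|/(f_submod AB)//] := boolP (e \in B).
by rewrite marg_mem0 // marg_ge0.
Qed.

Lemma f_le_subset (A B : {set T}) : A \subset B -> f A <= f B.
Proof.
move=> /setUidPr <-; rewrite -[B]set_enum; elim: (enum B) => [|e s IH].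
  by rewrite set_nil setU0.
by rewrite set_cons setUCA (le_trans IH) // -subr_ge0 marg_ge0.
Qed.

Lemma f_setU_le_sum (A B : {set T}) :
  f (A :|: B) <= f A + \sum_(e in B) marg f A e.
Proof.
rewrite -(big_enum +%R) -{1}(set_enum B); elim: (enum B) => [|e s IH].
  by rewrite big_nil addr0 set_nil setU0.
have := marg_le_subset e (subsetUl A [set x in s]).
rewrite set_cons setUCA big_cons /= /marg in IH *; lra.
Qed.

Lemma f_le_add_marg_bound (A B : {set T}) t :
  (forall e, marg f A e <= t) -> f B <= f A + t *+ #|B|.
Proof.
move=> margA; rewrite (le_trans (f_le_subset (subsetUr A B))) //.
rewrite (le_trans (f_setU_le_sum A B)) // lerD2l -sumr_const.
exact: ler_sum.
Qed.

End Submodular.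

Arguments thresholdGreedy : simpl never.

Section ThresholdGreedy.
Variables (T : finType) (R : realFieldType) (f : {set T} -> R).
Variables (k : nat) (tau : R) (Ts : {set T}).

Lemma thresholdGreedy_cons x (ord : seq T) (G : {set T}) :
  thresholdGreedy (x :: ord) f k Ts G tau =
  thresholdGreedy ord f k Ts
    (if [&& x \in Ts, tau <= marg f G x & (#|G| < k)%N] then x |: G else G) tau.
Proof. by []. Qed.

Lemma thresholdGreedy_sub (ord : seq T) (G : {set T}) :
  G \subset thresholdGreedy ord f k Ts G tau.
Proof.
elim: ord G => [|x s IH] G //=; rewrite thresholdGreedy_cons.
by apply: subset_trans (IH _); case: ifP => _ //; apply: subsetUr.
Qed.

Lemma thresholdGreedy_mulrn_card_le (ord : seq T) (G : {set T}) :
  tau *+ #|G| <= f G ->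
  tau *+ #|thresholdGreedy ord f k Ts G tau| <= f (thresholdGreedy ord f k Ts G tau).
Proof.
elim: ord G => [|x s IH] G // fG; rewrite thresholdGreedy_cons.
apply: IH; case: ifP => // /and3P[_ tau_le _].
have [xG|xG] := boolP (x \in G); first by rewrite (setUidPr _) // sub1set.
by rewrite cardsU1 xG add1n mulrS; move: tau_le; rewrite /marg; lra.
Qed.

(** An element is rejected either for a small marginal, which only shrinks
    as the set grows, or because the set is already full. *)
Lemma thresholdGreedy_marg_lt (ord : seq T) (G : {set T}) :
  monotone f -> submodular f -> 0 < tau ->
  (#|thresholdGreedy ord f k Ts G tau| < k)%N ->
  forall x, x \in ord -> x \in Ts -> marg f (thresholdGreedy ord f k Ts G tau) x < tau.
Proof.
move=> f_mono f_submod tau_gt0.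
elim: ord G => [|y s IH] G G'_lt x; first by rewrite in_nil.
rewrite thresholdGreedy_cons in G'_lt *.
rewrite inE => /orP[/eqP->{x} yTs|]; last exact: IH.
case: ifP G'_lt => [_ _|/negbT].
  by rewrite marg_mem0 // (subsetP (thresholdGreedy_sub _ _)) // setU11.
rewrite yTs /= negb_and -ltNge -leqNgt => /orP[marg_lt|k_le] G'_lt.
  exact: le_lt_trans (marg_le_subset f_mono f_submod y (thresholdGreedy_sub _ _)) marg_lt.
by have := leq_ltn_trans (subset_leq_card (thresholdGreedy_sub _ _)) G'_lt; rewrite ltnNge k_le.
Qed.

End ThresholdGreedy.

Lemma bigcup_thresholdFilter (T : finType) (R : realFieldType)
    (f : {set T} -> R) m (mach : T -> 'I_m) (G : {set T}) tau :
  \bigcup_(i < m) thresholdFilter f [set e | mach e == i] G tau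
  = thresholdFilter f setT G tau.
Proof.
apply/setP => e; rewrite !inE; apply/bigcupP/idP => [[i _]|tau_le].
  by rewrite !inE => /andP[].
by exists (mach e); rewrite // !inE eqxx.
Qed.

Lemma thresholdGreedy_filter_marg_lt (T : finType) (R : realFieldType)
    (f : {set T} -> R) (ord : seq T) k (G0 : {set T}) tau :
  monotone f -> submodular f -> 0 < tau -> (forall e, e \in ord) ->
  let G := thresholdGreedy ord f k (thresholdFilter f setT G0 tau) G0 tau in
  (#|G| < k)%N -> forall e, marg f G e < tau.
Proof.
move=> f_mono f_submod tau_gt0 ord_all G G_lt e.
have [eR|eR] := boolP (e \in thresholdFilter f setT G0 tau).
  exact: thresholdGreedy_marg_lt.
apply: le_lt_trans (marg_le_subset f_mono f_submod e (thresholdGreedy_sub _ _ _ _ _ _)) _.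
by move: eR; rewrite !inE ltNge.
Qed.

Theorem lemma1 (T : finType) (R : realFieldType) (f : {set T} -> R) (k : nat)
  (ord : seq T) (m : nat) (S : {set T}) (mach : T -> 'I_m) :
  (1 <= k)%N ->
  nonneg_fun f -> monotone f -> submodular f ->
  uniq ord -> (forall x : T, x \in ord) ->
  (* support of the sample: when p = 4 sqrt(k/n) >= 1, i.e. 16k >= n, S = V *)
  ((#|T| <= 16 * k)%N -> S = setT) ->
  f (algorithm1 ord f k S mach) >= OPT f k / 2.
Proof.
move=> k_gt0 f_ge0 f_mono f_submod _ ord_all _.
rewrite /algorithm1; set tau := OPT f k / (2 * k%:R).
set G0 := thresholdGreedy ord f k S set0 tau.
have [OPT_le0|OPT_gt0] := lerP (OPT f k) 0; first by apply: le_trans _ (f_ge0 _); lra.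
have k_gt0R : (0 : R) < k%:R by rewrite ltr0n.
have tau_gt0 : 0 < tau by rewrite divr_gt0 // mulr_gt0.
have tau_k : tau *+ k = OPT f k / 2.
  by rewrite -mulr_natr /tau; field; rewrite gt_eqF.
have G0_ge : tau *+ #|G0| <= f G0.
  by apply: thresholdGreedy_mulrn_card_le; rewrite cards0 mulr0n f_ge0.
have full_ge Ts : let G := thresholdGreedy ord f k Ts G0 tau in
    (k <= #|G|)%N -> OPT f k / 2 <= f G.
  move=> G k_le; have G_ge : tau *+ #|G| <= f G by apply: thresholdGreedy_mulrn_card_le.
  by rewrite -tau_k (le_trans _ G_ge) // ler_pMn2l.
have [G0_full|_] := leqP k #|G0|.
  by apply: full_ge; exact: leq_trans G0_full (subset_leq_card (thresholdGreedy_sub _ _ _ _ _ _)).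
rewrite bigcup_thresholdFilter; set G := thresholdGreedy _ _ _ _ _ _.
have [/full_ge//|G_lt] := leqP k #|G|.
have margG := thresholdGreedy_filter_marg_lt f_mono f_submod tau_gt0 ord_all G_lt.
suff : OPT f k <= f G + OPT f k / 2 by lra.
apply: bigmax_le => [|O O_le]; first by have := f_ge0 G; lra.
rewrite -tau_k (le_trans (f_le_add_marg_bound f_mono f_submod O (fun e => ltW (margG e)))) //.
by rewrite lerD2l ler_pMn2l.
Qed.
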